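(* Let $B$ be a nonempty finite set and $M\subseteq\omega^B$ an upper set. Then the sequence $(\mu_0(M),\mu_1(M),\mu_2(M),\dots)$ is of one of the following forms: (1) $(0,0,\dots)$, which occurs if $M$ is empty; (2) $(0,\dots,0,r_0,\dots,r_{N-1},1,1,\dots)$ for some $N\in\omega$ and reals $0<r_0<\dots<r_{N-1}<1$; (3) $(0,\dots,0,r_0,r_1,\dots)$ for some strictly increasing sequence $(r_i)_{i\in\omega}$ of positive reals with $\lim_{i\to\infty}r_i=1$. In cases (2) and (3) the initial block of zeroes may be empty.
   Context: $\omega$ denotes the set of nonnegative integers and $\omega^B$ the set of functions $B\to\omega$, ordered pointwise. $M\subseteq\omega^B$ is an upper set if $f\in M$ and $f\le g$ imply $g\in M$. For $T\in\omega$, $\mu_T$ is the probability measure on $\omega^B$ that is uniform on $\{f\in\omega^B:\sum_{b\in B}f(b)=T\}$ and zero elsewhere. *)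

From mathcomp Require Import all_boot.
From Stdlib Require Import Reals.

(* omega^B is modelled as {ffun B -> nat}; a subset M of omega^B as a
   (classically arbitrary) boolean predicate on it. *)

Definition upper_set (B : finType) (M : pred {ffun B -> nat}) : Prop :=
  forall f g : {ffun B -> nat},
    M f -> (forall b, (f b <= g b)%N) -> M g.

(* Number of f in omega^B with sum_b f b = T and f in M.  Such f take values
   <= T, so they are enumerated as functions B -> 'I_(T+1). *)
Definition level_count (B : finType) (T : nat) (M : pred {ffun B -> nat}) : nat :=
  #|[set g : {ffun B -> 'I_T.+1} |
       ((\sum_(b : B) val (g b))%N == T) && M [ffun b => val (g b)]]|.

Definition mu (B : finType) (T : nat) (M : pred {ffun B -> nat}) : R :=
  (INR (level_count B T M) / INR (level_count B T (@predT {ffun B -> nat})))%R.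

(* The level of total T is  L_T = {f : B -> nat | sum_b f b = T};  write
   S_T = |L_T| and A_T = |M ∩ L_T|, so that mu_T(M) = A_T / S_T.

   Double counting the pairs (f, c) with f ∈ L_T and
   c ∈ B, weighted by (f c + 1), through the bijection f |-> f + e_c onto
   {g ∈ L_(T+1) | g c > 0}, gives for an upper set M
       (T + |B|) A_T + (boundary term) = (T + 1) A_(T+1),
   and for M = everything  (T + |B|) S_T = (T + 1) S_(T+1).  Hence
   A_T / S_T is nondecreasing; it increases strictly when 0 < A_T < S_T,
   because an exchange argument then produces f ∉ M with f + e_c ∈ M.
   If f0 ∈ M, translating by f0 shows A_(T+s) >= S_T (s = weight of f0),
   and a telescoping bound on S gives 1 - mu_(T+s) <= s(|B|-1)/(T+1).

   Any [0,1]-valued nondecreasing sequence which increases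
   strictly while strictly between 0 and 1 and tends to 1 has shape (2) or
   (3).  The theorem follows: case (1) when M is empty, otherwise the
   sequence mu_T(M) satisfies these hypotheses. *)

From mathcomp Require Import all_boot.
From Stdlib Require Import Reals Lra Classical.
From mathcomp Require Import zify.
Set Implicit Arguments. Unset Strict Implicit. Unset Printing Implicit Defensive.

Lemma count_as_sum (T : Type) (P : pred T) (s : seq T) :
  count P s = \sum_(x <- s) P x.
Proof. by rewrite -sum1_count big_mkcond /=; apply: eq_bigr => x _; case: (P x). Qed.

Lemma ltn_sum_pointwise (I : finType) (F G : I -> nat) (i0 : I) :
  (forall i, F i <= G i) -> F i0 < G i0 -> \sum_i F i < \sum_i G i.
Proof.
move=> leFG ltFG; rewrite (bigD1 i0) //= [X in _ < X](bigD1 i0) //=.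
by rewrite -addSn leq_add // leq_sum.
Qed.

Section Levels.
Variable B : finType.
Implicit Types (f g h : {ffun B -> nat}) (P M : pred {ffun B -> nat}).

Definition weight f : nat := \sum_(b : B) f b.

Definition level (T : nat) : seq {ffun B -> nat} :=
  map (fun g : {ffun B -> 'I_T.+1} => [ffun b => val (g b)])
      (enum [pred g : {ffun B -> 'I_T.+1} | \sum_(b : B) val (g b) == T]).

Definition bump f (c : B) : {ffun B -> nat} := [ffun b => f b + (b == c)].

Lemma coord_le_weight f b : f b <= weight f.
Proof. by rewrite /weight (bigD1 b) //= leq_addr. Qed.

Lemma level_uniq T : uniq (level T).
Proof.
rewrite map_inj_uniq ?enum_uniq // => g1 g2 /ffunP eq12.
by apply/ffunP => b; apply: val_inj; have := eq12 b; rewrite !ffunE.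
Qed.

Lemma mem_level T f : (f \in level T) = (weight f == T).
Proof.
apply/mapP/idP => [[g] | /eqP wT].
  rewrite mem_enum inE => /eqP sumg ->; rewrite /weight.
  by under eq_bigr do rewrite ffunE; rewrite sumg.
have small b : f b < T.+1 by rewrite ltnS -wT coord_le_weight.
exists [ffun b => inord (f b)].
  rewrite mem_enum inE -[X in _ == X]wT; apply/eqP/eq_bigr => b _.
  by rewrite ffunE /= inordK.
by apply/ffunP => b; rewrite !ffunE /= inordK.
Qed.

Lemma level_countE T P : level_count B T P = count P (level T).
Proof.
rewrite /level_count /level count_map -sum1_count -sum1_card.
rewrite big_enum_cond /= [LHS]big_mkcond [RHS]big_mkcond /=.
by apply: eq_bigr => g _; rewrite !inE; case: (_ == _).
Qed.

Lemma weight_bump f c : weight (bump f c) = (weight f).+1.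
Proof.
rewrite /weight; under eq_bigr do rewrite ffunE.
rewrite big_split /= -addn1; congr (_ + _).
by rewrite (bigD1 c) //= eqxx big1 // => b /negbTE ->.
Qed.

Lemma bump_inj c : injective (bump ^~ c).
Proof.
move=> f1 f2 /ffunP eq12; apply/ffunP => b.
by have := eq12 b; rewrite !ffunE; apply: addIn.
Qed.

Lemma bump_perm T c :
  perm_eq (map (bump ^~ c) (level T)) [seq g <- level T.+1 | 0 < (g : {ffun B -> nat}) c].
Proof.
apply: uniq_perm; first by rewrite map_inj_uniq ?level_uniq //; apply: bump_inj.
  by rewrite filter_uniq ?level_uniq.
move=> g; rewrite mem_filter; apply/mapP/andP => [[f] | [gc_gt0]].
  rewrite mem_level => /eqP wT ->.
  by rewrite ffunE eqxx addn1 mem_level weight_bump wT.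
rewrite mem_level => /eqP wT; exists [ffun b => g b - (b == c)].
  rewrite mem_level -eqSS -(weight_bump _ c) -wT; apply/eqP; congr weight.
  by apply/ffunP => b; rewrite !ffunE; case: eqP => [->|_] /=; lia.
by apply/ffunP => b; rewrite !ffunE; case: eqP => [->|_] /=; lia.
Qed.

Lemma sum_succ_coords f : \sum_(c : B) (f c).+1 = weight f + #|B|.
Proof. by rewrite -sum1_card -big_split /=; apply: eq_bigr => c _; rewrite addn1. Qed.

Lemma double_count T P :
  \sum_(f <- level T) \sum_(c : B) (f c).+1 * P (bump f c)
  = T.+1 * count P (level T.+1).
Proof.
rewrite exchange_big /=.
transitivity (\sum_(c : B) \sum_(g <- level T.+1) g c * P g).
  apply: eq_bigr => c _.
  rewrite [RHS](bigID (fun g : {ffun B -> nat} => 0 < g c)) /=.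
  rewrite [X in _ = _ + X]big1 ?addn0 => [|g]; last by rewrite lt0n negbK => /eqP ->.
  rewrite -[RHS]big_filter -(perm_big _ (bump_perm T c)) [RHS]big_map.
  by apply: eq_bigr => f _; rewrite ffunE eqxx addn1.
rewrite exchange_big /= count_as_sum big_distrr /=; apply: eq_big_seq => g.
by rewrite mem_level => /eqP wT; rewrite -big_distrl /= -wT.
Qed.

Lemma level_size_rec T : (T + #|B|) * size (level T) = T.+1 * size (level T.+1).
Proof.
rewrite -(count_predT (level T.+1)) -double_count.
rewrite (eq_big_seq (fun _ => T + #|B|)) => [|f]; last first.
  rewrite mem_level => /eqP wT.
  by rewrite -wT -sum_succ_coords; apply: eq_bigr => c _; rewrite muln1.
by rewrite big_const_seq count_predT iter_addn_0 mulnC.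
Qed.

(* L_T contains T e_b for any b ∈ B. *)
Lemma level_size_gt0 T : 0 < #|B| -> 0 < size (level T).
Proof.
case/card_gt0P => b0 _; rewrite -has_predT; apply/hasP.
exists [ffun b => T * (b == b0)] => //; rewrite mem_level /weight.
under eq_bigr do rewrite ffunE.
by rewrite (bigD1 b0) //= eqxx muln1 big1 ?addn0 // => b /negbTE ->; rewrite muln0.
Qed.

(* S_T is nondecreasing in T, since |B| >= 1 in the recurrence. *)
Lemma level_size_mono T T' : 0 < #|B| -> T <= T' -> size (level T) <= size (level T').
Proof.
move=> B_gt0; apply: (@homo_leq _ (fun k => size (level k)) leq leqnn leq_trans) => {}T.
by rewrite -(@leq_pmul2l T.+1) // -level_size_rec leq_mul2r; apply/orP; right; lia.
Qed.

(* Telescoping the recurrence: S_(T+s) exceeds S_T by at most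
   s (|B| - 1) S_(T+s) / (T + 1). *)
Lemma level_size_gap T s : 0 < #|B| ->
  T.+1 * (size (level (T + s)) - size (level T))
  <= s * (#|B| - 1) * size (level (T + s)).
Proof.
move=> B_gt0; elim: s => [|s IH]; first by rewrite addn0 subnn muln0.
rewrite addnS; set k := T + s.
have mono_Tk := level_size_mono B_gt0 (leq_addr s T).
have mono_k := level_size_mono B_gt0 (leqnSn k).
move: IH mono_Tk mono_k (level_size_rec k); rewrite -/k.
set z := size (level T); set x := size (level k); set y := size (level k.+1).
move=> IH zx xy rec.
have step : k.+1 * (y - x) = (#|B| - 1) * x.
  by rewrite mulnBr -rec -mulnBl; congr (_ * x); lia.
have step_le : T.+1 * (y - x) <= (#|B| - 1) * y.
  apply: leq_trans (_ : k.+1 * (y - x) <= _); first by rewrite leq_mul2r; lia.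
  by rewrite step leq_mul2l xy orbT.
rewrite (_ : y - z = (y - x) + (x - z)); last by lia.
rewrite mulnDr mulSn !mulnDl leq_add //.
by apply: leq_trans IH _; rewrite leq_mul2l xy orbT.
Qed.

Section UpperSet.
Variable M : pred {ffun B -> nat}.
Hypothesis M_upper : upper_set B M.

Lemma upper_bump f c : M f -> M (bump f c).
Proof. by move=> Mf; apply: (M_upper Mf) => b; rewrite ffunE leq_addr. Qed.

Lemma growth_identity T :
  (T + #|B|) * count M (level T)
  + \sum_(f <- level T) \sum_(c : B) (f c).+1 * (~~ M f && M (bump f c))
  = T.+1 * count M (level T.+1).
Proof.
rewrite -double_count count_as_sum big_distrr -big_split /=.
apply: eq_big_seq => f; rewrite mem_level => /eqP wT.
rewrite -wT -sum_succ_coords mulnC big_distrr -big_split /=.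
apply: eq_bigr => c _; rewrite mulnC -mulnDr; congr (_ * _).
by case Mf: (M f); rewrite ?(upper_bump c Mf).
Qed.

Lemma count_level_grow T :
  (T + #|B|) * count M (level T) <= T.+1 * count M (level T.+1).
Proof. by rewrite -growth_identity leq_addr. Qed.

(* Within one level, M and its complement are joined by an edge
   f ∉ M, f + e_c ∈ M.  Induction on how far f falls short of h ∈ M. *)
Lemma boundary_pair h f : weight f = weight h -> M h -> ~~ M f ->
  exists f1 c, [/\ weight f1 = weight f, ~~ M f1 & M (bump f1 c)].
Proof.
move=> wfh Mh; move: {2}(\sum_b (h b - f b)) (leqnn (\sum_b (h b - f b))) => d.
elim: d f wfh => [|d IH] f wfh short nMf.
  case/negP: nMf; apply: (M_upper Mh) => b.
  by move: short; rewrite leqn0 sum_nat_eq0 => /forallP /(_ b); rewrite subn_eq0.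
have [b fb_lt] : exists b, f b < h b.
  apply/existsP; apply: contraNT nMf; rewrite negb_exists => /forallP hf.
  by apply: (M_upper Mh) => b; have := hf b; rewrite -leqNgt.
have [c hc_lt] : exists c, h c < f c.
  apply/existsP; apply: contraTT (leqnn (weight h)).
  rewrite negb_exists -ltnNge -[X in X < _]wfh => /forallP fh.
  by apply: (ltn_sum_pointwise (i0 := b)) => // x; have := fh x; rewrite -leqNgt.
have bc : b != c by apply: contraTneq fb_lt => ->; lia.
pose f' := bump [ffun x => f x - (x == c)] b.
have f_eq : bump [ffun x => f x - (x == c)] c = f.
  by apply/ffunP => x; rewrite !ffunE; case: eqP => [->|_] /=; lia.
have wf' : weight f' = weight f by rewrite weight_bump -[in RHS]f_eq weight_bump.
have [Mf' | nMf'] := boolP (M f').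
  exists f, b; split => //; apply: (M_upper Mf') => x; rewrite !ffunE.
  by rewrite leq_add2r leq_subr.
have shorter : \sum_x (h x - f' x) <= d.
  rewrite -ltnS; apply: leq_trans short; apply: (ltn_sum_pointwise (i0 := b)).
    move=> x; rewrite !ffunE; case: (x =P c) => [->|_] /=.
      by rewrite (eq_sym c b) (negbTE bc) /=; lia.
    by case: (x =P b) => [->|_] /=; lia.
  by rewrite !ffunE eqxx (negbTE bc) /=; lia.
have [f1 [c1 [wf1 nMf1 Mbump]]] := IH f' (etrans wf' wfh) shorter nMf'.
by exists f1, c1; rewrite wf1 wf'.
Qed.

Lemma count_level_grow_strict T :
  0 < count M (level T) < size (level T) ->
  (T + #|B|) * count M (level T) < T.+1 * count M (level T.+1).
Proof.
case/andP; rewrite -has_count => /hasP [h hT Mh].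
rewrite -(count_predC M) -[X in X < _]addn0 ltn_add2l -has_count => /hasP [f fT /= nMf].
move: hT fT; rewrite !mem_level => /eqP wh /eqP wf.
have [f1 [c [wf1 nMf1 Mbump]]] := boundary_pair (etrans wf (esym wh)) Mh nMf.
rewrite -growth_identity -[X in X < _]addn0 ltn_add2l.
have f1T : f1 \in level T by rewrite mem_level wf1 wf.
rewrite (bigD1_seq f1) ?level_uniq //= (bigD1 c) //= nMf1 Mbump /=.
by rewrite muln1 -!addnA addSn.
Qed.

(* Translation by f0 ∈ M embeds L_T into M ∩ L_(T + weight f0). *)
Lemma count_level_shift f0 T : M f0 ->
  size (level T) <= count M (level (T + weight f0)).
Proof.
move=> Mf0; pose shift f : {ffun B -> nat} := [ffun b => f b + f0 b].
rewrite -size_filter -(size_map shift); apply: uniq_leq_size.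
  rewrite map_inj_uniq ?level_uniq // => f1 f2 /ffunP eq12.
  by apply/ffunP => b; have := eq12 b; rewrite !ffunE; apply: addIn.
move=> g /mapP [f fT ->]; rewrite mem_filter; apply/andP; split.
  by apply: (M_upper Mf0) => b; rewrite ffunE leq_addl.
move: fT; rewrite !mem_level => /eqP <-; apply/eqP.
by rewrite /weight -big_split /=; apply: eq_bigr => b _; rewrite ffunE.
Qed.

End UpperSet.
End Levels.

(* Comparing A/S with A'/S' when S and S' are linked by k S = l S'. *)
Lemma cross_mul_leq (k l x y a b : nat) :
  0 < l -> k * x = l * y -> k * a <= l * b -> a * y <= b * x.
Proof.
move=> l_gt0 exy kab; rewrite -(leq_pmul2l l_gt0) [l * (a * y)]mulnCA -exy.
by rewrite [a * _]mulnCA !mulnA leq_mul2r kab orbT.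
Qed.

Lemma cross_mul_ltn (k l x y a b : nat) :
  0 < l -> 0 < x -> k * x = l * y -> k * a < l * b -> a * y < b * x.
Proof.
move=> l_gt0 x_gt0 exy kab; rewrite -(ltn_pmul2l l_gt0) [l * (a * y)]mulnCA -exy.
by rewrite [a * _]mulnCA !mulnA ltn_pmul2r.
Qed.

Local Open Scope R_scope.

Lemma ratio_le (a b c d : nat) : (0 < b)%nat -> (0 < d)%nat -> (a * d <= c * b)%nat ->
  INR a / INR b <= INR c / INR d.
Proof.
move=> /ltP/lt_INR b_gt0 /ltP/lt_INR d_gt0 /leP/le_INR; rewrite !mult_INR => cross.
simpl in b_gt0, d_gt0; apply: (Rmult_le_reg_r (INR b * INR d)); first nra.
have -> : INR a / INR b * (INR b * INR d) = INR a * INR d by field; lra.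
have -> : INR c / INR d * (INR b * INR d) = INR c * INR b by field; lra.
exact: cross.
Qed.

Lemma ratio_lt (a b c d : nat) : (0 < b)%nat -> (0 < d)%nat -> (a * d < c * b)%nat ->
  INR a / INR b < INR c / INR d.
Proof.
move=> /ltP/lt_INR b_gt0 /ltP/lt_INR d_gt0 /ltP/lt_INR; rewrite !mult_INR => cross.
simpl in b_gt0, d_gt0; apply: (Rmult_lt_reg_r (INR b * INR d)); first nra.
have -> : INR a / INR b * (INR b * INR d) = INR a * INR d by field; lra.
have -> : INR c / INR d * (INR b * INR d) = INR c * INR b by field; lra.
exact: cross.
Qed.

Lemma ratio_defect (a S t C : nat) : (0 < S)%nat -> (a <= S)%nat -> (0 < t)%nat ->
  (t * (S - a) <= C * S)%nat -> 1 - INR a / INR S <= INR C / INR t.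
Proof.
move=> /ltP/lt_INR S_gt0 a_le /ltP/lt_INR t_gt0 /leP/le_INR.
rewrite !mult_INR minus_INR; last exact/leP.
simpl in S_gt0, t_gt0; move=> defect.
have -> : 1 - INR a / INR S = (INR S - INR a) / INR S by field; lra.
apply: (Rmult_le_reg_r (INR S * INR t)); first nra.
have -> : (INR S - INR a) / INR S * (INR S * INR t) = INR t * (INR S - INR a) by field; lra.
have -> : INR C / INR t * (INR S * INR t) = INR C * INR S by field; lra.
exact: defect.
Qed.


Lemma cv_one_of_defect (m : nat -> R) (C : R) (s : nat) : 0 <= C ->
  (forall T, m T <= 1) -> (forall T, 1 - m (T + s)%nat <= C / INR T.+1) ->
  Un_cv m 1.
Proof.
move=> C_ge0 m_le1 defect eps eps_gt0.
have [N [invN N_gt0]] := archimed_cor1 (eps / (C + 1))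
  (Rdiv_lt_0_compat eps (C + 1) eps_gt0 ltac:(lra)).
exists (N + s)%nat => n /leP n_ge; rewrite /R_dist.
have -> : n = (n - s + s)%nat by lia.
have t_ge : INR N <= INR (n - s).+1 by apply/le_INR/leP; lia.
have N_pos : 0 < INR N by apply: (lt_INR 0).
have invN_pos : 0 < / INR N by apply: Rinv_0_lt_compat.
have := defect (n - s)%nat; have := m_le1 (n - s + s)%nat.
set t := INR (n - s).+1 in t_ge *; set x := m _ => x_le1 x_defect.
rewrite Rabs_left1; last lra.
have inv_le : / t <= / INR N by apply: Rinv_le_contravar.
have : C / t <= C * / INR N by apply: Rmult_le_compat_l.
have : C * / INR N < eps.
  apply: (Rle_lt_trans _ ((C + 1) * / INR N)); first nra.
  have -> : eps = (C + 1) * (eps / (C + 1)) by field; lra.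
  apply: Rmult_lt_compat_l; lra.
lra.
Qed.

Lemma monotone_sequence_shape (m : nat -> R) :
  (forall T, 0 <= m T <= 1) ->
  (forall T, m T <= m T.+1) ->
  (forall T, 0 < m T < 1 -> m T < m T.+1) ->
  Un_cv m 1 ->
  (exists (K N : nat) (r : nat -> R),
      (forall T : nat, (T < K)%nat -> m T = 0) /\
      (forall i : nat, (i < N)%nat -> m (K + i)%nat = r i) /\
      (forall T : nat, (K + N <= T)%nat -> m T = 1) /\
      (forall i : nat, (i < N)%nat -> 0 < r i < 1) /\
      (forall i : nat, (i.+1 < N)%nat -> r i < r i.+1))
  \/
  (exists (K : nat) (r : nat -> R),
      (forall T : nat, (T < K)%nat -> m T = 0) /\
      (forall i : nat, m (K + i)%nat = r i) /\
      (forall i : nat, 0 < r i) /\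
      (forall i : nat, r i < r i.+1) /\
      Un_cv r 1).
Proof.
move=> bounds step strict cvg.
have mono i j : (i <= j)%nat -> m i <= m j.
  exact: (homo_leq Rle_refl (fun y x z => @Rle_trans x y z) step).
have [T0 pos_T0] : exists T, Rlt_dec 0 (m T).
  have [N close] := cvg (1 / 2) ltac:(lra).
  have := close N (le_n N); rewrite /R_dist => /Rabs_def2 [_ near1].
  by exists N; case: Rlt_dec => // not_pos; lra.
case: (@ex_minnP (fun T => Rlt_dec 0 (m T) : bool) (ex_intro _ T0 pos_T0)) => K pos_K min_K.
have zero_before T : (T < K)%nat -> m T = 0.
  move=> lt_TK; have [T_ge0 _] := bounds T; case: (Rlt_dec 0 (m T)) => [pos_T | nonpos_T].
    by have := min_K T; case: Rlt_dec => // _ /(_ isT); lia.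
  lra.
have pos_after i : 0 < m (K + i)%nat.
  move: pos_K; case: Rlt_dec => // pos_K _.
  exact: Rlt_le_trans pos_K (mono _ _ (leq_addr i K)).
have [[T1 one_T1] | never_one] := classic (exists T, m T = 1).
- left; have one_T1' : (fun T => Req_EM_T (m T) 1 : bool) T1 by case: Req_EM_T.
  have [K1 one_K1 min_K1] :=
    @ex_minnP (fun T => Req_EM_T (m T) 1 : bool) (ex_intro _ T1 one_T1').
  move: one_K1; case: Req_EM_T => // one_K1 _.
  have le_KK1 : (K <= K1)%nat.
    by apply: min_K; case: Rlt_dec => // not_pos; exfalso; lra.
  have below_one i : (i < K1 - K)%nat -> 0 < m (K + i)%nat < 1.
    move=> lt_i; split; first exact: pos_after.
    have := bounds (K + i)%nat; have := min_K1 (K + i)%nat.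
    case: Req_EM_T => [_ /(_ isT) le_K1 | ne1 _ [_ /Rle_lt_or_eq_dec [//|/ne1 //]]].
    by exfalso; lia.
  exists K, (K1 - K)%nat, (fun i => m (K + i)%nat); split=> //; split=> //; split.
    move=> T le_T; have := mono K1 T ltac:(lia); have := bounds T; intros; lra.
  split=> // i lt_i; rewrite addnS; apply: strict; apply: below_one; lia.
- right; have below_one T : m T < 1.
    have [_ /Rle_lt_or_eq_dec [//|one_T]] := bounds T.
    by case: never_one; exists T.
  exists K, (fun i => m (K + i)%nat); do 4 (split => //).
    by move=> i; rewrite addnS; apply: strict; split; [apply: pos_after | apply: below_one].
  by move=> eps /cvg [N close]; exists N => n n_ge; apply: close; lia.
Qed.

Lemma mu_ratio (B : finType) (T : nat) (M : pred {ffun B -> nat}) :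
  mu B T M = INR (count M (level B T)) / INR (size (level B T)).
Proof. by rewrite /mu !level_countE count_predT. Qed.

Section MuSequence.
Variables (B : finType) (M : pred {ffun B -> nat}).
Hypotheses (B_gt0 : (0 < #|B|)%nat) (M_upper : upper_set B M).

Lemma mu_bounds T : 0 <= mu B T M <= 1.
Proof.
rewrite mu_ratio; have S_gt0 := level_size_gt0 T B_gt0.
have S_pos : 0 < INR (size (level B T)) by apply: (lt_INR 0); apply/ltP.
split; first by apply: Rle_mult_inv_pos => //; apply: pos_INR.
rewrite -(Rdiv_diag (INR (size (level B T)))); last lra.
by apply: ratio_le => //; rewrite leq_mul2r count_size orbT.
Qed.

Lemma mu_nondecr T : mu B T M <= mu B T.+1 M.
Proof.
rewrite !mu_ratio; apply: ratio_le; rewrite ?level_size_gt0 //.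
exact: cross_mul_leq (level_size_rec B T) (count_level_grow M_upper T).
Qed.

Lemma mu_incr T : 0 < mu B T M < 1 -> mu B T M < mu B T.+1 M.
Proof.
rewrite !mu_ratio => -[mu_pos mu_lt1].
have S_gt0 := level_size_gt0 T B_gt0.
have A_gt0 : (0 < count M (level B T))%nat.
  rewrite lt0n; apply/eqP => A_eq0.
  by move: mu_pos; rewrite A_eq0 INR_0 /Rdiv Rmult_0_l; lra.
have A_lt : (count M (level B T) < size (level B T))%nat.
  rewrite ltn_neqAle count_size andbT; apply/eqP => A_eqS.
  by move: mu_lt1; rewrite A_eqS Rdiv_diag; [lra | apply/not_0_INR; lia].
apply: ratio_lt; rewrite ?level_size_gt0 //.
apply: cross_mul_ltn (level_size_rec B T) _ => //.
by apply: count_level_grow_strict => //; rewrite A_gt0 A_lt.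
Qed.

Lemma mu_defect f0 T : M f0 ->
  1 - mu B (T + weight f0) M <= INR (weight f0 * (#|B| - 1)) / INR T.+1.
Proof.
move=> Mf0; rewrite mu_ratio; apply: ratio_defect.
- exact: level_size_gt0.
- exact: count_size.
- by [].
- apply: leq_trans (level_size_gap T (weight f0) B_gt0); rewrite leq_mul2l leq_sub2l ?orbT //.
  exact: count_level_shift.
Qed.

Lemma mu_cvg_one f0 : M f0 -> Un_cv (fun T => mu B T M) 1.
Proof.
move=> Mf0; apply: (cv_one_of_defect (pos_INR (weight f0 * (#|B| - 1)))).
  by move=> T; case: (mu_bounds T).
by move=> T; apply: mu_defect.
Qed.

End MuSequence.

Theorem theorem6 (B : finType) (M : pred {ffun B -> nat}) :
  (0 < #|B|)%nat ->
  upper_set B M ->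
  (* (1) *)
  ((forall f, ~~ M f) /\ (forall T : nat, mu B T M = 0))
  \/
  (* (2) *)
  (exists (K N : nat) (r : nat -> R),
      (forall T : nat, (T < K)%nat -> mu B T M = 0) /\
      (forall i : nat, (i < N)%nat -> mu B (K + i) M = r i) /\
      (forall T : nat, (K + N <= T)%nat -> mu B T M = 1) /\
      (forall i : nat, (i < N)%nat -> 0 < r i < 1) /\
      (forall i : nat, (i.+1 < N)%nat -> r i < r i.+1))
  \/
  (* (3) *)
  (exists (K : nat) (r : nat -> R),
      (forall T : nat, (T < K)%nat -> mu B T M = 0) /\
      (forall i : nat, mu B (K + i) M = r i) /\
      (forall i : nat, 0 < r i) /\
      (forall i : nat, r i < r i.+1) /\
      Un_cv r 1).
Proof.
move=> B_gt0 M_upper.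
have [[f0 Mf0] | M_empty] := classic (exists f, M f).
  right; exact: (@monotone_sequence_shape (fun T => mu B T M)
    (mu_bounds M B_gt0) (mu_nondecr B_gt0 M_upper)
    (fun T => @mu_incr _ _ B_gt0 M_upper T) (mu_cvg_one B_gt0 M_upper Mf0)).
have notM f : ~~ M f by apply/negP => Mf; apply: M_empty; exists f.
left; split => // T.
have M_pred0 : M =1 pred0 by move=> f; apply/negbTE/notM.
by rewrite mu_ratio (eq_count M_pred0) count_pred0 INR_0 /Rdiv Rmult_0_l.
Qed.
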